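(* Let $n\ge 2$, let $M$ be an $(n-1)\times(n-1)$ circulant matrix over $R$, and let $\alpha,\beta,\gamma\in R$ with $\gamma=\beta$ or $\gamma=-\beta$. Let $B$ be the $n\times n$ bordered circulant matrix whose first row is $(\alpha,\beta,\dots,\beta)$, whose first column is $(\alpha,\gamma,\dots,\gamma)^T$, and whose lower-right $(n-1)\times(n-1)$ block is $M$. Then the linear code over $R$ generated by the rows of $[I_n\mid B]$ is a Euclidean isodual code of length $2n$ over $R$.
   Context: $R=\mathbb{Z}_4[v]/(v^2-v)$. Linear codes over $R$ are $R$-submodules of $R^N$; the Euclidean dual of $\mathcal{C}$ is $\mathcal{C}^\perp=\{\mathbf{x}:\sum_ix_ic_i=0\ \forall\mathbf{c}\in\mathcal{C}\}$. Two codes of length $N$ over $R$ are equivalent if one is obtained from the other by a permutation of coordinates followed by multiplication of some coordinates by units of $R$. A code is Euclidean isodual if it is equivalent to its Euclidean dual. A circulant matrix is one in which each row is the cyclic shift by one position to the right of the previous row. *)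

From HB Require Import structures.
From mathcomp Require Import all_boot all_order all_algebra all_fingroup.
Set Implicit Arguments. Unset Strict Implicit. Unset Printing Implicit Defensive.
Import GRing.Theory.
Local Open Scope ring_scope.

(* The ring R = Z_4[v]/(v^2 - v): an element a + b v is represented by the
   pair of coefficients (a, b) in Z_4 x Z_4; multiplication uses v^2 = v:
   (a + b v)(c + d v) = ac + (ad + bc + bd) v. *)
Inductive Rv := MkR of 'Z_4 & 'Z_4.
Definition rv_a (x : Rv) := let: MkR a _ := x in a.
Definition rv_b (x : Rv) := let: MkR _ b := x in b.
Definition rv_to (x : Rv) : 'Z_4 * 'Z_4 := (rv_a x, rv_b x).
Definition rv_of (p : 'Z_4 * 'Z_4) : Rv := MkR p.1 p.2.
Lemma rv_toK : cancel rv_to rv_of. Proof. by case. Qed.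
HB.instance Definition _ := Finite.copy Rv (can_type rv_toK).


Definition rv_zero := MkR 0 0.
Definition rv_one := MkR 1 0.
Definition rv_v := MkR 0 1.
Definition rv_add x y := MkR (rv_a x + rv_a y) (rv_b x + rv_b y).
Definition rv_opp x := MkR (- rv_a x) (- rv_b x).
Definition rv_mul x y :=
  MkR (rv_a x * rv_a y)
      (rv_a x * rv_b y + rv_b x * rv_a y + rv_b x * rv_b y).

Definition z4s : seq 'Z_4 := [:: 0; 1; 2%:R; 3%:R].
Lemma mem_z4s (x : 'Z_4) : x \in z4s.
Proof. by case: x => [[|[|[|[|n]]]] Hn] //; apply/orP; vm_compute. Qed.
Definition rvs : seq Rv := [seq MkR a b | a <- z4s, b <- z4s].
Lemma mem_rvs (x : Rv) : x \in rvs.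
Proof. case: x => a b; apply/allpairsP; exists (a, b); by rewrite !mem_z4s. Qed.
Lemma all1 (P Q : Rv -> Rv) :
  all (fun x => P x == Q x) rvs -> forall x, P x = Q x.
Proof. by move=> /allP H x; apply/eqP/H/mem_rvs. Qed.
Lemma all2 (P Q : Rv -> Rv -> Rv) :
  all (fun x => all (fun y => P x y == Q x y) rvs) rvs -> forall x y, P x y = Q x y.
Proof. by move=> /allP H x y; move/allP: (H x (mem_rvs x)) => /(_ y (mem_rvs y))/eqP. Qed.
Lemma all3 (P Q : Rv -> Rv -> Rv -> Rv) :
  all (fun x => all (fun y => all (fun z => P x y z == Q x y z) rvs) rvs) rvs ->
  forall x y z, P x y z = Q x y z.
Proof.
move=> /allP H x y z; move/allP: (H x (mem_rvs x)) => /(_ y (mem_rvs y)).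
by move/allP => /(_ z (mem_rvs z))/eqP.
Qed.

Lemma rv_addA : associative rv_add.
Proof. move=> x y z; apply (all3 (P := fun x y z => rv_add x (rv_add y z)) (Q := fun x y z => rv_add (rv_add x y) z)); vm_compute; reflexivity. Qed.

Lemma rv_addC : commutative rv_add.
Proof. move=> x y; apply (all2 (P := fun x y => rv_add x y) (Q := fun x y => rv_add y x)); vm_compute; reflexivity. Qed.

Lemma rv_add0 : left_id rv_zero rv_add.
Proof. move=> x; apply (all1 (P := fun x => rv_add rv_zero x) (Q := fun x => x)); vm_compute; reflexivity. Qed.

Lemma rv_addN : left_inverse rv_zero rv_opp rv_add.
Proof. move=> x; apply (all1 (P := fun x => rv_add (rv_opp x) x) (Q := fun x => rv_zero)); vm_compute; reflexivity. Qed.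

HB.instance Definition _ := GRing.isZmodule.Build Rv rv_addA rv_addC rv_add0 rv_addN.

Lemma rv_mulA : associative rv_mul.
Proof. move=> x y z; apply (all3 (P := fun x y z => rv_mul x (rv_mul y z)) (Q := fun x y z => rv_mul (rv_mul x y) z)); vm_compute; reflexivity. Qed.

Lemma rv_mulC : commutative rv_mul.
Proof. move=> x y; apply (all2 (P := fun x y => rv_mul x y) (Q := fun x y => rv_mul y x)); vm_compute; reflexivity. Qed.

Lemma rv_mul1 : left_id rv_one rv_mul.
Proof. move=> x; apply (all1 (P := fun x => rv_mul rv_one x) (Q := fun x => x)); vm_compute; reflexivity. Qed.

Lemma rv_mulDl : left_distributive rv_mul rv_add.
Proof. move=> x y z; apply (all3 (P := fun x y z => rv_mul (rv_add x y) z) (Q := fun x y z => rv_add (rv_mul x z) (rv_mul y z))); vm_compute; reflexivity. Qed.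

Lemma rv_one_neq0 : rv_one != rv_zero.
Proof. by vm_compute. Qed.
HB.instance Definition _ :=
  GRing.Zmodule_isComNzRing.Build Rv rv_mulA rv_mulC rv_mul1 rv_mulDl rv_one_neq0.

Lemma rv_vv : rv_v * rv_v = rv_v. Proof. by apply/eqP; vm_compute. Qed.

Definition rv_unit (r : Rv) : Prop := exists w : Rv, r * w = 1.

Definition code_gen (k N : nat) (G : 'M[Rv]_(k, N)) : {set 'rV[Rv]_N} :=
  [set x : 'rV[Rv]_N | [exists u : 'rV[Rv]_k, x == u *m G]].

Definition euclid_dual (N : nat) (C : {set 'rV[Rv]_N}) : {set 'rV[Rv]_N} :=
  [set x : 'rV[Rv]_N | [forall (c : 'rV[Rv]_N | c \in C), \sum_(i < N) x 0 i * c 0 i == 0]].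

Definition code_equiv (N : nat) (C D : {set 'rV[Rv]_N}) : Prop :=
  exists (s : 'S_N) (u : 'I_N -> Rv), (forall i, rv_unit (u i)) /\
    D = [set \row_i (u i * c 0 (s i)) | c : 'rV[Rv]_N in C].

Definition euclid_isodual (N : nat) (C : {set 'rV[Rv]_N}) : Prop :=
  code_equiv C (euclid_dual C).

Definition circulant (m : nat) (M : 'M[Rv]_m) : Prop :=
  forall (i j : 'I_m) (Hi : (i.+1 < m)%N), M (Ordinal Hi) (ordS j) = M i j.

Definition bordered (m : nat) (a b c : Rv) (M : 'M[Rv]_m) : 'M[Rv]_m.+1 :=
  \matrix_(i, j)
    match unlift ord0 i, unlift ord0 j with
    | None, None => a
    | None, Some _ => b
    | Some _, None => c
    | Some i', Some j' => M i' j'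
    end.

From mathcomp Require Import all_boot all_order all_algebra all_fingroup.
Set Implicit Arguments. Unset Strict Implicit. Unset Printing Implicit Defensive.
Import GRing.Theory.
Local Open Scope ring_scope.

(* The dual of the code generated by [I | A] is generated by [-A^T | I].  If a
   monomial matrix W (a permutation matrix with unit weights) satisfies
   A W = W A^T, then [I | A] [[0, -W], [W, 0]] = -W [-A^T | I]; the block
   matrix is again monomial and -W is invertible, so the code is equivalent to
   its dual.  For a circulant M, M_(i, j) = c_(j - i), the reflection j |-> -j
   of Z/(n-1) gives M_(i, -j) = c_(-i-j), symmetric in i and j; extending it
   by the fixed point 0 with weight e = +-1, where e gamma = beta, takes care
   of the border. *)

Section MonomialMatrix.
Variable R : pzRingType.

Definition monomial_mx N (s : 'S_N) (u : 'I_N -> R) : 'M[R]_N :=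
  \matrix_(a, i) (if a == s i then u i else 0).

Lemma mulmx_monomialE p N (A : 'M[R]_(p, N)) s u i j :
  (A *m monomial_mx s u) i j = A i (s j) * u j.
Proof.
rewrite !mxE (bigD1 (s j)) //= mxE eqxx big1 ?addr0 // => a /negbTE neq_a.
by rewrite mxE neq_a mulr0.
Qed.

Lemma monomial_mulmxE p N (A : 'M[R]_(N, p)) s u i j :
  (monomial_mx s u *m A) i j = u (s^-1%g i) * A (s^-1%g i) j.
Proof.
rewrite !mxE (bigD1 (s^-1%g i)) //= mxE permKV eqxx big1 ?addr0 // => a neq_a.
by rewrite mxE eq_sym (canF_eq (permK s)) (negbTE neq_a) mul0r.
Qed.

Lemma trmx_monomial_mulmx N (s : 'S_N) (u w : 'I_N -> R) : (forall i, w i * u i = 1) ->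
  (monomial_mx s w)^T *m monomial_mx s u = 1%:M.
Proof.
move=> wu1; apply/matrixP => a b.
rewrite mulmx_monomialE !mxE (inj_eq perm_inj) eq_sym.
by case: eqP => [->|_]; rewrite ?wu1 ?mul0r.
Qed.

Definition cross_fun N (s : 'S_N) (i : 'I_(N + N)) : 'I_(N + N) :=
  match split i with inl j => rshift N (s j) | inr j => lshift N (s j) end.

Lemma cross_fun_inj N (s : 'S_N) : injective (cross_fun s).
Proof.
move=> i1 i2; rewrite /cross_fun -[i1]splitK -[i2]splitK.
case: (split i1) => j1; case: (split i2) => j2; rewrite !unsplitK //=.
- by move/rshift_inj/perm_inj ->.
- by move/eqP; rewrite eq_rlshift.
- by move/eqP; rewrite eq_lrshift.
- by move/lshift_inj/perm_inj ->.
Qed.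

Definition cross_perm N (s : 'S_N) : 'S_(N + N) := perm (@cross_fun_inj N s).

Definition cross_weight N (u : 'I_N -> R) (i : 'I_(N + N)) : R :=
  match split i with inl j => u j | inr j => - u j end.

Lemma monomial_mx_cross N (s : 'S_N) (u : 'I_N -> R) :
  monomial_mx (cross_perm s) (cross_weight u) =
  block_mx 0 (- monomial_mx s u) (monomial_mx s u) 0.
Proof.
apply/matrixP => a i; rewrite mxE permE /cross_fun /cross_weight.
rewrite -[a]splitK -[i]splitK.
case: (split a) => a'; case: (split i) => i'; rewrite !unsplitK.
- by rewrite block_mxEul mxE eq_lrshift.
- by rewrite block_mxEur !mxE (inj_eq (@lshift_inj _ _)); case: eqP; rewrite ?oppr0.
- by rewrite block_mxEdl mxE (inj_eq (@rshift_inj _ _)).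
- by rewrite block_mxEdr mxE eq_rlshift.
Qed.

End MonomialMatrix.

Lemma rv_unit_opp (r : Rv) : rv_unit r -> rv_unit (- r).
Proof. by case=> w rw1; exists (- w); rewrite mulrNN. Qed.

Lemma row_monomial_mx N (s : 'S_N) (u : 'I_N -> Rv) (c : 'rV[Rv]_N) :
  \row_i (u i * c 0 (s i)) = c *m monomial_mx s u.
Proof. by apply/matrixP => a i; rewrite ord1 mulmx_monomialE mxE mulrC. Qed.

Section Codes.
Variables (k N : nat).
Implicit Type G : 'M[Rv]_(k, N).

Lemma code_equiv_monomial G (s : 'S_N) (u : 'I_N -> Rv) :
  (forall i, rv_unit (u i)) ->
  code_equiv (code_gen G) (code_gen (G *m monomial_mx s u)).
Proof.
move=> u_unit; exists s, u; split=> //; apply/setP => x.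
apply/idP/imsetP => [|[c]].
- rewrite inE => /existsP[y /eqP ->]; exists (y *m G).
    by rewrite inE; apply/existsP; exists y.
  by rewrite row_monomial_mx mulmxA.
- rewrite inE => /existsP[y /eqP ->] ->.
  by rewrite inE row_monomial_mx -mulmxA; apply/existsP; exists y.
Qed.

Lemma code_gen_linv_mulmx (U V : 'M[Rv]_k) G :
  V *m U = 1%:M -> code_gen (U *m G) = code_gen G.
Proof.
move=> VU1; apply/setP => x; rewrite !inE.
apply/existsP/existsP => -[y /eqP ->].
- by exists (y *m U); rewrite mulmxA.
- by exists (y *m V); rewrite -mulmxA (mulmxA V) VU1 mul1mx.
Qed.

Lemma mem_euclid_dual_code_gen G x :
  (x \in euclid_dual (code_gen G)) = (x *m G^T == 0).
Proof.
have dotE (c : 'rV_N) : \sum_(i < N) x 0 i * c 0 i = (x *m c^T) 0 0.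
  by rewrite mxE; apply: eq_bigr => i _; rewrite mxE.
rewrite inE; apply/forallP/eqP => [orth | xG0 c].
- apply/matrixP => a j; rewrite ord1 [RHS]mxE.
  have Gj_in : delta_mx 0 j *m G \in code_gen G.
    by rewrite inE; apply/existsP; exists (delta_mx 0 j).
  move/implyP/(_ Gj_in)/eqP: (orth (delta_mx 0 j *m G)).
  by rewrite dotE -rowE tr_row colE mulmxA -colE mxE.
- apply/implyP; rewrite inE => /existsP[y /eqP ->].
  by rewrite dotE trmx_mul mulmxA xG0 mul0mx mxE.
Qed.

End Codes.

Lemma euclid_dual_systematic k p (A : 'M[Rv]_(k, p)) :
  euclid_dual (code_gen (row_mx 1%:M A)) = code_gen (row_mx (- A^T) 1%:M).
Proof.
apply/setP => x; rewrite mem_euclid_dual_code_gen inE.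
rewrite -[x]hsubmxK tr_row_mx trmx1 mul_row_col mulmx1 addr_eq0.
apply/eqP/existsP => [->|[y /eqP]].
- by exists (rsubmx x); rewrite mul_mx_row mulmxN mulmx1.
- by rewrite mul_mx_row mulmxN mulmx1 => /eq_row_mx[-> ->].
Qed.

Lemma isodual_systematic n (A : 'M[Rv]_n) (s : 'S_n) (u w : 'I_n -> Rv) :
  (forall i, w i * u i = 1) ->
  A *m monomial_mx s u = monomial_mx s u *m A^T ->
  euclid_isodual (code_gen (row_mx 1%:M A)).
Proof.
set W := monomial_mx s u => wu1 AW.
have cross : row_mx 1%:M A *m monomial_mx (cross_perm s) (cross_weight u) =
             - W *m row_mx (- A^T) 1%:M.
  rewrite monomial_mx_cross mul_row_block !mulmx0 !mul1mx add0r addr0 AW.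
  by rewrite mul_mx_row mulmxN mulNmx opprK mulmx1.
rewrite /euclid_isodual euclid_dual_systematic.
rewrite -(@code_gen_linv_mulmx _ _ (- W) (- (monomial_mx s w)^T)
            (row_mx (- A^T) 1%:M)); last first.
  by rewrite mulNmx mulmxN opprK trmx_monomial_mulmx.
rewrite -cross; apply: code_equiv_monomial => i.
have u_unit j : rv_unit (u j) by exists (w j); rewrite mulrC.
by rewrite /cross_weight; case: (split i) => j //; apply: rv_unit_opp.
Qed.

Section Circulant.
Variable k : nat.
Local Notation m := k.+1.

Lemma ordS_addZp1 (j : 'I_m) : ordS j = j + inZp 1.
Proof. by apply/val_inj; rewrite /= modnDmr addn1. Qed.

Lemma circulantE (M : 'M[Rv]_m) : circulant M -> forall i j, M i j = M ord0 (j - i).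
Proof.
move=> circM i j; move def_t: (val i) => t.
elim: t i j def_t => [|t IHt] i j def_t.
  have -> : i = ord0 by apply/val_inj.
  by rewrite subr0.
have lt_t : (t.+1 < m)%N by rewrite -def_t ltn_ord.
pose i' : 'I_m := Ordinal (ltnW lt_t).
have -> : i = Ordinal (lt_t : (i'.+1 < m)%N) by apply/val_inj.
rewrite -[j](ord_predK) circM IHt // ordS_addZp1.
have -> : Ordinal (lt_t : (i'.+1 < m)%N) = i' + inZp 1.
  by apply/val_inj; rewrite -ordS_addZp1 /= modn_small.
by rewrite opprD addrA addrAC addrK.
Qed.

Definition opp_perm : 'S_m := perm (@oppr_inj _).

Lemma opp_permE j : opp_perm j = - j.
Proof. by rewrite permE. Qed.

Lemma opp_permV : opp_perm^-1%g = opp_perm.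
Proof. by apply/permP => x; apply: (@perm_inj _ opp_perm); rewrite permKV !permE opprK. Qed.

Lemma circulant_opp_sym (M : 'M[Rv]_m) : circulant M ->
  forall i j, M i (- j) = M j (- i).
Proof. by move=> circM i j; rewrite (circulantE circM i) (circulantE circM j) addrC. Qed.

Definition border_weight (e : Rv) (j : 'I_m.+1) : Rv := if j == ord0 then e else 1.

Lemma border_weight0 e : border_weight e ord0 = e.
Proof. by rewrite /border_weight eqxx. Qed.

Lemma border_weight_lift e j : border_weight e (lift ord0 j) = 1.
Proof. by rewrite /border_weight eq_sym (negbTE (neq_lift _ _)). Qed.

Definition border_perm : 'S_m.+1 := lift_perm ord0 ord0 opp_perm.

Lemma border_permV : border_perm^-1%g = border_perm.
Proof. by rewrite /border_perm lift_permV opp_permV. Qed.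

Lemma bordered_monomial_intertwine (alpha beta gamma e : Rv) (M : 'M[Rv]_m) :
  circulant M -> e * gamma = beta ->
  let W := monomial_mx border_perm (border_weight e) in
  let B := bordered alpha beta gamma M in
  B *m W = W *m B^T.
Proof.
move=> circM eg W B; apply/matrixP => i j.
rewrite mulmx_monomialE monomial_mulmxE border_permV [B^T _ _]mxE /B /border_perm.
case: (unliftP ord0 i) => [i' ->|->]; case: (unliftP ord0 j) => [j' ->|->];
  rewrite ?lift_perm_lift ?lift_perm_id ?border_weight_lift ?border_weight0;
  rewrite !mxE ?liftK ?unlift_none ?opp_permE.
- by rewrite mulr1 mul1r circulant_opp_sym.
- by rewrite mul1r mulrC.
- by rewrite mulr1.
- by rewrite mulrC.
Qed.

End Circulant.

Lemma sign_of_eq_or_opp (R : pzRingType) (beta gamma : R) :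
  gamma = beta \/ gamma = - beta -> exists2 e : R, e * e = 1 & e * gamma = beta.
Proof.
by case=> ->; [exists 1 | exists (-1)]; rewrite ?mulr1 ?mulrNN ?mul1r ?mulN1r ?opprK.
Qed.

Theorem mainTheorem9 (n : nat) (Hn : (2 <= n)%N) (M : 'M[Rv]_(n.-1))
  (alpha beta gamma : Rv) :
  circulant M -> (gamma = beta \/ gamma = - beta) ->
  euclid_isodual (code_gen (row_mx 1%:M (bordered alpha beta gamma M))).
Proof.
case: n Hn M => [|[|k]] // _ M circM /sign_of_eq_or_opp[e e2 eg].
apply: (isodual_systematic (u := border_weight e) (w := border_weight e)).
  by move=> j; rewrite /border_weight; case: eqP; rewrite ?mulr1.
exact: (bordered_monomial_intertwine alpha circM eg).
Qed.
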